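(* Let $\mathcal N(G,\pi,\mathbf p)$ be any feedforward network with shared weights and ReLU activations, and let $L$ be an objective depending on $\mathbf p$ only through the computed function $f_{\mathbf p}$. Consider the update rule $$p^{(t+1)}_{i} = p^{(t)}_{i} - \frac{\eta}{\kappa_{i}(\mathbf p^{(t)})} \frac{\partial L}{\partial p_{i}}(\mathbf p^{(t)}),\qquad \kappa_{i}(\mathbf p)=\frac{1}{2}\frac{\partial^2 \gamma^2_{\rm net}(\mathbf p)}{\partial p^2_{i}}.$$ This update is invariant to all feasible node-wise rescalings. Moreover, the simpler update rule obtained by using $\kappa^{(1)}_i(\mathbf p)$ in place of $\kappa_i(\mathbf p)$ is also invariant to all feasible node-wise rescalings.
   Context: A feedforward network with shared weights $\mathcal N(G,\pi,\mathbf p)$: $G=(V,E)$ is a directed acyclic graph with input nodes $V_{\rm in}$ and output nodes $V_{\rm out}$, $\mathbf p\in\mathbb R^m$, $\pi:E\to\{1,\dots,m\}$, edge $e$ has weight $w_e=p_{\pi(e)}$, and $E_i=\{e:\pi(e)=i\}$. Input nodes output the corresponding input coordinate; internal nodes compute $h_v=[\sum_{(u\to v)\in E}w_{u\to v}h_u]_+$ with $[z]_+=\max(z,0)$; output nodes compute $h_v=\sum_{(u\to v)\in E}w_{u\to v}h_u$; $f_{\mathbf p}$ is the resulting function. $\mathcal P$ is the set of directed paths $\zeta=(\zeta_0,\dots,\zeta_{\text{len}(\zeta)})$ from input to output nodes, and $\gamma^2_{\rm net}(\mathbf p)=\sum_{\zeta\in\mathcal P}\prod_{j=0}^{\text{len}(\zeta)-1}p^2_{\pi(\zeta_j\to\zeta_{j+1})}$.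 Also $\kappa^{(1)}_{i}(\mathbf p) = \sum_{e\in E_i}\sum_{\zeta \in \mathcal{P}} \mathbf 1_{e\in \zeta} \prod_{j:\, e\neq (\zeta_j\rightarrow \zeta_{j+1})} p^2_{\pi(\zeta_j\rightarrow \zeta_{j+1})}$. A node-wise rescaling is given by $\beta_v>0$ for internal nodes ($\beta_v=1$ for input and output nodes) and maps $w_{u\to v}\mapsto(\beta_v/\beta_u)w_{u\to v}$; it is feasible if edges sharing a parameter remain equal after the transformation, so it induces a transformation $\mathcal T$ of the parameter vector. An update rule $\mathcal A$ (mapping $\mathbf p^{(t)}$ to $\mathbf p^{(t+1)}$) is invariant to $\mathcal T$ if $f_{\mathcal A(\mathbf p)}=f_{\mathcal A(\mathcal T(\mathbf p))}$ for every $\mathbf p$. *)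

From HB Require Import structures.
From mathcomp Require Import all_boot all_order all_algebra.
From mathcomp Require Import all_classical all_reals all_analysis.
Set Implicit Arguments. Unset Strict Implicit. Unset Printing Implicit Defensive.
Import Order.TTheory GRing.Theory Num.Theory.
Local Open Scope ring_scope.

Definition acyclic (V : finType) (E : rel V) : Prop :=
  forall (x : V) (s : seq V), path E x s -> last x s = x -> s = [::].

Definition upd (R : Type) (m : nat) (p : 'I_m -> R) (i : 'I_m) (t : R) : 'I_m -> R :=
  fun j => if j == i then t else p j.

Definition partial (R : realType) (m : nat) (F : ('I_m -> R) -> R)
  (p : 'I_m -> R) (i : 'I_m) : R :=
  derive1 (fun t => F (upd p i t)) (p i).

Definition partial2 (R : realType) (m : nat) (F : ('I_m -> R) -> R)
  (p : 'I_m -> R) (i : 'I_m) : R :=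
  derive1 (fun s => partial F (upd p i s) i) (p i).

Section Net.
Variables (R : realType) (V : finType) (E : rel V) (Vin Vout : {set V})
          (m : nat) (pi : V -> V -> 'I_m).

Definition weight (p : 'I_m -> R) (e : V * V) : R := p (pi e.1 e.2).

Definition hstep (p : 'I_m -> R) (x : V -> R) (h : V -> R) (v : V) : R :=
  if v \in Vin then x v
  else let z := \sum_(u : V | E u v) weight p (u, v) * h u in
       if v \in Vout then z else Num.max z 0.

(* node outputs h_v (stable after #|V| steps, since G is acyclic) *)
Definition hnet (p : 'I_m -> R) (x : V -> R) : V -> R :=
  iter #|V| (hstep p x) (fun _ => 0).

(* the computed function f_p : inputs (values on Vin) -> outputs (values on Vout) *)
Definition netfun (p : 'I_m -> R) : (V -> R) -> (V -> R) :=
  fun x v => if v \in Vout then hnet p x v else 0.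

Definition io_path (s : seq V) : bool :=
  if s is x :: s' then [&& x \in Vin, last x s' \in Vout & path E x s'] else false.

Definition pedges (s : seq V) : seq (V * V) := zip s (behead s).

(* sum over the set P of input-output paths (a path in a DAG has at most #|V| nodes) *)
Definition pathsum (F : seq V -> R) : R :=
  \sum_(k < #|V|) \sum_(t : k.+1.-tuple V | io_path t) F t.

Definition gamma2 (p : 'I_m -> R) : R :=
  pathsum (fun s => \prod_(e <- pedges s) (weight p e) ^+ 2).

Definition kappa (p : 'I_m -> R) (i : 'I_m) : R :=
  2^-1 * partial2 gamma2 p i.

Definition kappa1 (p : 'I_m -> R) (i : 'I_m) : R :=
  \sum_(e : V * V | E e.1 e.2 && (pi e.1 e.2 == i))
    pathsum (fun s => if e \in pedges s then
                        \prod_(e' <- pedges s | e' != e) (weight p e') ^+ 2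
                      else 0).

Definition rescaling (beta : V -> R) : Prop :=
  (forall v, 0 < beta v) /\ (forall v, (v \in Vin) || (v \in Vout) -> beta v = 1).

Definition feasible (beta : V -> R) : Prop :=
  forall (p : 'I_m -> R) (u v u' v' : V), E u v -> E u' v' -> pi u v = pi u' v' ->
    beta v / beta u * weight p (u, v) = beta v' / beta u' * weight p (u', v').

Definition induced_by (beta : V -> R) (T : ('I_m -> R) -> ('I_m -> R)) : Prop :=
  forall (p : 'I_m -> R) (u v : V), E u v -> T p (pi u v) = beta v / beta u * p (pi u v).

Definition net_invariant (A T : ('I_m -> R) -> ('I_m -> R)) : Prop :=
  forall p, netfun (A p) = netfun (A (T p)).

End Net.

Definition update (R : realType) (m : nat) (k : ('I_m -> R) -> 'I_m -> R)
  (L : ('I_m -> R) -> R) (eta : R) (p : 'I_m -> R) : 'I_m -> R :=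
  fun i => p i - eta / k p i * partial L p i.

From HB Require Import structures.
From mathcomp Require Import all_boot all_order all_algebra.
From mathcomp Require Import all_classical all_reals all_analysis.
From mathcomp Require Import ring.
Set Implicit Arguments. Unset Strict Implicit. Unset Printing Implicit Defensive.
Import Order.TTheory GRing.Theory Num.Theory.
Local Open Scope ring_scope.

(* A feasible rescaling multiplies the weight of each edge u -> v by
   r(u, v) = beta_v / beta_u, and feasibility forces this ratio to depend only
   on the shared parameter of the edge; so T acts on every parameter i used by
   the network as p_i |-> r_i p_i.  Positive homogeneity of the ReLU gives
   h_v(T p) = beta_v h_v(p), hence f_(T p) = f_p since beta = 1 on input and
   output nodes; along an input-output path the ratios telescope to 1, so
   gamma_net^2 is T-invariant as well.  Consequently the i-th coordinate line
   through T p is the one through p reparametrised by t |-> t / r_i: partial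
   derivatives of L scale by 1 / r_i, kappa_i and kappa^(1)_i by 1 / r_i^2, and
   the update of T p is T applied to the update of p. *)

Section LineDerivatives.
Variable R : realType.

Lemma derivable_divr (c x : R) : derivable (fun t : R => t / c) x 1.
Proof. by apply: derivableM; [exact: derivable_id | exact: derivable_cst]. Qed.

Lemma derive1_comp_divr (f : R -> R) (c x : R) : derivable f (x / c) 1 ->
  derive1 (fun t => f (t / c)) x = derive1 f (x / c) / c.
Proof.
move=> df; rewrite -[fun t => f (t / c)]/(f \o (fun t => t / c)).
by rewrite derive1_comp ?derivable_divr // (@derive1Mr _ id) ?derive1E ?derive_id ?mul1r.
Qed.

Lemma derive1_horner_divr (P : {poly R}) (c : R) :
  derive1 (fun t => P.[t / c]) = fun t => (c^-1 *: P^`()).[t / c].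
Proof.
apply/funext => t; rewrite (derive1_comp_divr (f := horner P)) ?derivable_horner //.
by rewrite -derivE hornerZ mulrC.
Qed.

Lemma upd_id (m : nat) (q : 'I_m -> R) j t : upd q j t j = t.
Proof. by rewrite /upd eqxx. Qed.

Lemma upd_upd (m : nat) (q : 'I_m -> R) j s t : upd (upd q j s) j t = upd q j t.
Proof. by apply/funext => k; rewrite /upd; case: eqP. Qed.

Lemma partial2_line (m : nat) (F : ('I_m -> R) -> R) q j :
  partial2 F q j = derive1 (derive1 (fun t => F (upd q j t))) (q j).
Proof.
rewrite /partial2.
suff -> : (fun s => partial F (upd q j s) j) = derive1 (fun t => F (upd q j t)) by [].
apply/funext => s; rewrite /partial upd_id.
suff -> : (fun t => F (upd (upd q j s) j t)) = (fun t => F (upd q j t)) by [].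
by apply/funext => t; rewrite upd_upd.
Qed.

End LineDerivatives.

Section Rescaling.
Variables (R : realType) (V : finType) (E : rel V) (Vin Vout : {set V})
  (m : nat) (pi : V -> V -> 'I_m) (beta : V -> R)
  (T : ('I_m -> R) -> ('I_m -> R)).
Hypothesis acyclicE : acyclic E.
Hypothesis beta_gt0 : forall v, 0 < beta v.
Hypothesis beta_io : forall v, (v \in Vin) || (v \in Vout) -> beta v = 1.
Hypothesis feasible_beta : feasible E pi beta.
Hypothesis T_induced : induced_by E pi beta T.

Definition ratio (e : V * V) : R := beta e.2 / beta e.1.

Definition eq_on_edges (q q' : 'I_m -> R) : Prop :=
  forall u v, E u v -> q (pi u v) = q' (pi u v).

Lemma ratio_neq0 e : ratio e != 0.
Proof. by rewrite gt_eqF // divr_gt0. Qed.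

Lemma ratio_shared u v u' v' : E u v -> E u' v' -> pi u v = pi u' v' ->
  ratio (u, v) = ratio (u', v').
Proof.
move=> Euv Euv' eq_pi.
by have := feasible_beta (fun _ => 1) Euv Euv' eq_pi; rewrite /weight !mulr1.
Qed.

Lemma T_edge q u v : E u v -> T q (pi u v) = ratio (u, v) * q (pi u v).
Proof. exact: T_induced. Qed.

Lemma netfun_eq_on_edges q q' :
  eq_on_edges q q' -> netfun E Vin Vout pi q = netfun E Vin Vout pi q'.
Proof.
move=> eq_qq'; rewrite /netfun /hnet.
suff -> : hstep E Vin Vout pi q = hstep E Vin Vout pi q' by [].
apply/funext => x; apply/funext => h; apply/funext => v; rewrite /hstep.
by under eq_bigr => u Euv do rewrite /weight /= eq_qq' //.
Qed.

Lemma iter_hstep_T q x n v :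
  iter n (hstep E Vin Vout pi (T q) x) (fun _ => 0) v
  = beta v * iter n (hstep E Vin Vout pi q x) (fun _ => 0) v.
Proof.
elim: n v => [|n IHn] v /=; first by rewrite mulr0.
rewrite /hstep; case: ifP => vin; first by rewrite beta_io ?vin // mul1r.
move: IHn; set h := iter n (hstep _ _ _ _ (T q) x) _; set h' := iter n _ _ => IHn.
have -> : \sum_(u | E u v) weight pi (T q) (u, v) * h u
          = beta v * \sum_(u | E u v) weight pi q (u, v) * h' u.
  rewrite big_distrr; apply: eq_bigr => u Euv; rewrite /weight /= T_edge // IHn /ratio /=.
  by have := beta_gt0 u; rewrite lt0r => /andP [bu _]; field.
by case: ifP => // _; rewrite maxr_pMr ?mulr0 // ltW.
Qed.

Lemma netfun_T q : netfun E Vin Vout pi (T q) = netfun E Vin Vout pi q.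
Proof.
apply/funext => x; apply/funext => v; rewrite /netfun /hnet.
by case: ifP => vout //; rewrite iter_hstep_T beta_io ?vout ?orbT // mul1r.
Qed.

Lemma path_pedges x s e : path E x s -> e \in pedges (x :: s) -> E e.1 e.2.
Proof.
elim: s x => [|y s IHs] x //= /andP [Exy ps].
by rewrite inE => /orP [/eqP -> //|]; apply: IHs.
Qed.

Lemma io_path_pedges (s : seq V) e : io_path E Vin Vout s -> e \in pedges s -> E e.1 e.2.
Proof. by case: s => // x s /and3P [_ _]; apply: path_pedges. Qed.

Lemma prod_ratio_path x s :
  path E x s -> \prod_(e <- pedges (x :: s)) ratio e = beta (last x s) / beta x.
Proof.
elim: s x => [|y s IHs] x /=; first by rewrite big_nil divff // gt_eqF.
move=> /andP [_ ps]; rewrite big_cons IHs // /ratio /=.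
by rewrite mulrC mulrA divfK // gt_eqF.
Qed.

Lemma prod_ratio_io_path (s : seq V) :
  io_path E Vin Vout s -> \prod_(e <- pedges s) ratio e = 1.
Proof.
case: s => // x s /and3P [xin lout ps].
by rewrite prod_ratio_path // !beta_io ?xin ?lout ?orbT // divr1.
Qed.

Lemma path_uniq x s : path E x s -> uniq (x :: s).
Proof.
elim: s x => [|y s IHs] x //= /andP [Exy ps].
have /= -> := IHs y ps; rewrite andbT; apply/negP => x_ys.
have : path E x (y :: s) by rewrite /= Exy.
case/splitPr: x_ys => s1 s2; rewrite cat_path /= => /andP [ps1 /andP [Ex _]].
have := @acyclicE x (rcons s1 x); rewrite rcons_path ps1 Ex last_rcons.
by move=> /(_ isT erefl); case: s1 {ps1 Ex}.
Qed.

Lemma mem_pedges_fst (s : seq V) e : e \in pedges s -> e.1 \in s.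
Proof.
elim: s => [|x [|y s] IHs] //=; rewrite inE => /orP [/eqP -> /=|/IHs].
  by rewrite inE eqxx.
by move=> e1_in; rewrite inE e1_in orbT.
Qed.

Lemma uniq_pedges (s : seq V) : uniq s -> uniq (pedges s).
Proof.
elim: s => [|x [|y s] IHs] //= /andP [x_notin us]; rewrite IHs // andbT.
by apply/negP => /mem_pedges_fst /= x_in; rewrite x_in in x_notin.
Qed.

Lemma io_path_uniq_pedges (s : seq V) : io_path E Vin Vout s -> uniq (pedges s).
Proof. by case: s => // x s /and3P [_ _ ps]; apply/uniq_pedges/path_uniq. Qed.

Lemma gamma2_eq_on_edges q q' :
  eq_on_edges q q' -> gamma2 E Vin Vout pi q = gamma2 E Vin Vout pi q'.
Proof.
move=> eq_qq'; apply: eq_bigr => k _; apply: eq_bigr => s io.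
by apply: eq_big_seq => e e_in; rewrite /weight eq_qq' //; apply: io_path_pedges e_in.
Qed.

Lemma gamma2_T q : gamma2 E Vin Vout pi (T q) = gamma2 E Vin Vout pi q.
Proof.
apply: eq_bigr => k _; apply: eq_bigr => s io.
rewrite (eq_big_seq (fun e => ratio e ^+ 2 * weight pi q e ^+ 2)); last first.
  by move=> [u v] e_in; rewrite /weight /= T_edge ?exprMn //; apply: io_path_pedges e_in.
by rewrite big_split /= prodrXl prod_ratio_io_path // expr1n mul1r.
Qed.

Lemma gamma2_line_poly q j :
  exists P : {poly R}, forall t, gamma2 E Vin Vout pi (upd q j t) = P.[t].
Proof.
exists (\sum_(k < #|V|) \sum_(s : k.+1.-tuple V | io_path E Vin Vout s)
   \prod_(e <- pedges s) (if pi e.1 e.2 == j then 'X else (q (pi e.1 e.2))%:P) ^+ 2).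
move=> t; rewrite horner_sum; apply: eq_bigr => k _.
rewrite horner_sum; apply: eq_bigr => s _; rewrite horner_prod; apply: eq_bigr => e _.
by rewrite horner_exp /weight /upd; case: eqP; rewrite ?hornerX ?hornerC.
Qed.

Lemma eq_on_edges_upd_T p u v t : E u v ->
  eq_on_edges (upd (T p) (pi u v) t) (T (upd p (pi u v) (t / ratio (u, v)))).
Proof.
move=> Euv u' v' Euv'; rewrite T_edge // /upd.
case: eqP => [eq_pi|_]; last exact: T_edge.
by rewrite (ratio_shared Euv' Euv eq_pi) mulrC divfK // ratio_neq0.
Qed.

Section InvariantObjective.
Variable F : ('I_m -> R) -> R.
Hypothesis F_eq_on_edges : forall q q', eq_on_edges q q' -> F q = F q'.
Hypothesis F_T : forall q, F (T q) = F q.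

Lemma line_T p u v : E u v ->
  (fun t => F (upd (T p) (pi u v) t)) = (fun t => F (upd p (pi u v) (t / ratio (u, v)))).
Proof.
move=> Euv; apply/funext => t.
by rewrite -[RHS]F_T; apply/F_eq_on_edges/eq_on_edges_upd_T.
Qed.

Lemma partial_T p u v : E u v ->
  derivable (fun t => F (upd p (pi u v) t)) (p (pi u v)) 1 ->
  partial F (T p) (pi u v) = partial F p (pi u v) / ratio (u, v).
Proof.
move=> Euv dF; rewrite /partial line_T // T_edge //.
have scaleK : ratio (u, v) * p (pi u v) / ratio (u, v) = p (pi u v).
  by rewrite mulrC mulKf ?ratio_neq0.
by rewrite (derive1_comp_divr (f := fun s => F (upd p (pi u v) s))) scaleK.
Qed.

End InvariantObjective.

Lemma kappa_T p u v : E u v ->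
  kappa E Vin Vout pi (T p) (pi u v) = kappa E Vin Vout pi p (pi u v) / ratio (u, v) ^+ 2.
Proof.
move=> Euv; rewrite /kappa !partial2_line (line_T gamma2_eq_on_edges gamma2_T) //.
have [P line_P] := gamma2_line_poly p (pi u v).
under eq_fun do rewrite line_P.
rewrite (_ : (fun t => gamma2 E Vin Vout pi (upd p (pi u v) t)) = horner P); last exact/funext.
rewrite !derive1_horner_divr -!derivE T_edge // derivZ !hornerZ.
have := ratio_neq0 (u, v); set c := ratio (u, v) => c_neq0.
by rewrite (mulrC c) mulfK //; field.
Qed.

Lemma kappa1_T p u v : E u v ->
  kappa1 E Vin Vout pi (T p) (pi u v) = kappa1 E Vin Vout pi p (pi u v) / ratio (u, v) ^+ 2.
Proof.
move=> Euv; rewrite /kappa1 big_distrl; apply: eq_bigr => e /andP [Ee /eqP pi_e].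
have ratio_e : ratio e = ratio (u, v).
  by case: e Ee pi_e => a b Eab pi_ab; apply: ratio_shared Eab Euv pi_ab.
rewrite /pathsum big_distrl; apply: eq_bigr => k _; rewrite big_distrl.
apply: eq_bigr => s io /=; case: ifP => e_in; last by rewrite mul0r.
rewrite big_seq_cond (eq_bigr (fun e' => ratio e' ^+ 2 * weight pi p e' ^+ 2)); last first.
  move=> [a b] /andP [ab_in _]; rewrite /weight /= T_edge ?exprMn //.
  exact: io_path_pedges ab_in.
rewrite -big_seq_cond big_split /= prodrXl.
have prod_ratio_off_e : \prod_(e' <- pedges s | e' != e) ratio e' = (ratio e)^-1.
  have := prod_ratio_io_path io; rewrite (bigD1_seq e) ?io_path_uniq_pedges //= => prod1.
  by apply: (mulfI (ratio_neq0 e)); rewrite prod1 mulfV ?ratio_neq0.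
by rewrite prod_ratio_off_e ratio_e exprVn mulrC.
Qed.

Lemma update_T (k : ('I_m -> R) -> 'I_m -> R) (L : ('I_m -> R) -> R) (eta : R) :
  (forall p q, netfun E Vin Vout pi p = netfun E Vin Vout pi q -> L p = L q) ->
  (forall p i, derivable (fun t => L (upd p i t)) (p i) 1) ->
  (forall p u v, E u v -> k (T p) (pi u v) = k p (pi u v) / ratio (u, v) ^+ 2) ->
  net_invariant E Vin Vout pi (update k L eta) T.
Proof.
move=> Lf dL k_T p.
have L_eq_on_edges q q' : eq_on_edges q q' -> L q = L q'.
  by move=> /netfun_eq_on_edges; apply: Lf.
have L_T q : L (T q) = L q by apply/Lf/netfun_T.
rewrite -[LHS]netfun_T; apply: netfun_eq_on_edges => u v Euv.
rewrite /update !T_edge // k_T // (partial_T L_eq_on_edges L_T) // invf_div.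
have c_neq0 := ratio_neq0 (u, v); set c := ratio (u, v).
(* Opaque, so that [field] does not ask for [k p (pi u v) != 0]: the identity
   also holds when it vanishes, since [x / 0 = 0]. *)
set Kinv := (k p (pi u v))^-1.
by field.
Qed.

End Rescaling.

Theorem theorem2 (R : realType) (V : finType) (E : rel V) (Vin Vout : {set V})
  (m : nat) (pi : V -> V -> 'I_m)
  (hacyc : acyclic E)
  (hdisj : [disjoint Vin & Vout])
  (hin : forall u v, E u v -> v \notin Vin)
  (hout : forall u v, E u v -> u \notin Vout)
  (L : ('I_m -> R) -> R)
  (hLf : forall p q, netfun E Vin Vout pi p = netfun E Vin Vout pi q -> L p = L q)
  (hLd : forall (p : 'I_m -> R) (i : 'I_m), derivable (fun t => L (upd p i t)) (p i) 1)
  (eta : R) (heta : 0 < eta)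
  (beta : V -> R) (T : ('I_m -> R) -> ('I_m -> R))
  (hbeta : rescaling Vin Vout beta)
  (hfeas : feasible E pi beta)
  (hT : induced_by E pi beta T) :
  net_invariant E Vin Vout pi (update (kappa E Vin Vout pi) L eta) T /\
  net_invariant E Vin Vout pi (update (kappa1 E Vin Vout pi) L eta) T.
Proof.
case: hbeta => beta_gt0 beta_io.
split; apply: update_T => // p u v Euv.
- exact: kappa_T.
- exact: kappa1_T.
Qed.
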